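(* Let $p$ be a prime, $t\ge1$, and let $(K_n,\alpha)$ be an edge-labeled complete graph over $\mathbb{Z}/p^t\mathbb{Z}$ whose edges carry labels $p^{i_1},\dots,p^{i_{r_n}}$ (in no particular order), with $1\le i_s<t$ for all $s$. For $1<i\le n$ let $p^{a_i}=\big[\bigcup_{k=1}^{i-1}\{(p^{(i,k)})\}\big]$. Then for each $i>1$ the vector $F^{(i)}=(f^{(i)}_{v_1},\dots,f^{(i)}_{v_n})$ defined by $f^{(i)}_v=p^{a_i}$ if $v\in V^{(i,a_i+1)}$ and $f^{(i)}_v=0$ otherwise is an $i$-th flow-up class (with $f^{(i)}_{v_i}=p^{a_i}$). Moreover, $\operatorname{rk}[\mathbb{Z}/p^t\mathbb{Z}]_{(K_n,\alpha)}=n$.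
   Context: A spline on an edge-labeled graph $(G,\alpha)$ over $\mathbb{Z}/m\mathbb{Z}$ (edges labeled by nonzero ideals) is a vector $(f_{v_1},\dots,f_{v_n})\in(\mathbb{Z}/m\mathbb{Z})^n$ with $f_{v_i}-f_{v_j}\in\alpha(v_iv_j)$ for every edge; the splines form a $\mathbb{Z}$-module $[\mathbb{Z}/m\mathbb{Z}]_{(G,\alpha)}$ whose rank $\operatorname{rk}$ is the smallest size of a generating set. An $i$-th flow-up class is a spline with $f_{v_i}\ne0$ and $f_{v_t}=0$ for $t<i$. $K_n$ is the complete graph on $v_1,\dots,v_n$, $r_n=n(n-1)/2$; an edge labeled $p^c$ means its ideal is generated by $p^c+p^t\mathbb{Z}$. A trail is a sequence of vertices and edges in which no edge is repeated; a $v_k$-trail of $v_i$ is a trail from $v_i$ to $v_k$; $(p^{(i,k)})$ is the gcd (in $\mathbb{Z}$) of the integer labels on such a trail, $\{(p^{(i,k)})\}$ the set of these over all $v_k$-trails of $v_i$, and $[\,S\,]$ the lcm of a finite set $S$. For $1\le j\le n$ and a positive integer $b$, $V^{(j,b)}$ is the vertex set of $H^{(j,b)}$, the largest connected subgraph of $K_n$ containing $v_j$, having $v_j$ as its smallest-index vertex, all of whose edges carry labels $p^{c}$ with $b\le c<t$; i.e. the connected component of $v_j$ in the graph on $\{v_j,\dots,v_n\}$ whose edges are those edges of $K_n$ among these vertices labeled $p^c$ with $c\ge b$. *)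

From mathcomp Require Import all_boot all_order all_algebra.
Unset Printing Implicit Defensive.
Import GRing.Theory.
Local Open Scope ring_scope.

(* Vertices v_1,...,v_n are the ordinals 0,...,n-1 of 'I_n.
   The edge-labeling of K_n is given by an exponent function
   lab : 'I_n -> 'I_n -> nat (meaningful for x != y, assumed symmetric):
   the edge v_x v_y is labeled p^(lab x y), i.e. by the ideal of
   Z/p^tZ generated by p^(lab x y) + p^t Z. *)

Definition in_ideal (m : nat) (c x : 'Z_m) : Prop := exists r : 'Z_m, x = r * c.

Definition spline (p t n : nat) (lab : 'I_n -> 'I_n -> nat)
    (f : {ffun 'I_n -> 'Z_(p ^ t)}) : Prop :=
  forall x y : 'I_n, x != y -> in_ideal (p ^ t) ((p ^ lab x y)%:R) (f x - f y).

(* i-th flow-up class (i is a 0-based index) *)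
Definition flow_up (p t n : nat) (lab : 'I_n -> 'I_n -> nat) (i : 'I_n)
    (f : {ffun 'I_n -> 'Z_(p ^ t)}) : Prop :=
  [/\ spline p t n lab f, f i != 0 & forall s : 'I_n, (s < i)%N -> f s = 0].

Definition generates (p t n : nat) (lab : 'I_n -> 'I_n -> nat) (m : nat)
    (g : 'I_m -> {ffun 'I_n -> 'Z_(p ^ t)}) : Prop :=
  (forall j, spline p t n lab (g j)) /\
  forall f, spline p t n lab f ->
    exists c : 'I_m -> int, f = \sum_(j < m) (g j) *~ (c j).

Definition spline_rank (p t n : nat) (lab : 'I_n -> 'I_n -> nat) (r : nat) : Prop :=
  (exists g : 'I_r -> {ffun 'I_n -> 'Z_(p ^ t)}, generates p t n lab r g) /\
  (forall (m : nat) (g : 'I_m -> {ffun 'I_n -> 'Z_(p ^ t)}),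
      generates p t n lab m g -> (r <= m)%N).

(* A trail starting at x is encoded by the sequence s of the subsequent
   vertices (the trail is x :: s); its edges are the consecutive pairs,
   stored as unordered pairs (min, max). *)
Definition trail_edges (n : nat) (x : 'I_n) (s : seq 'I_n) : seq (nat * nat) :=
  pairmap (fun a b : 'I_n => (minn a b, maxn a b)) x s.

Definition is_trail (n : nat) (x : 'I_n) (s : seq 'I_n) : bool :=
  path (fun a b : 'I_n => a != b) x s && uniq (trail_edges n x s).

Definition trail_gcd (p n : nat) (lab : 'I_n -> 'I_n -> nat) (x : 'I_n)
    (s : seq 'I_n) : nat :=
  foldr gcdn 0 (pairmap (fun a b : 'I_n => (p ^ lab a b)%N) x s).

(* Since a trail uses each of the
   r_n = n(n-1)/2 edges of K_n at most once, every trail x :: s has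
   size s <= r_n, so sequences of length <= r_n enumerate all trails. *)
Definition seqs_upto (n N : nat) : seq (seq 'I_n) :=
  flatten [seq [seq val tu | tu <- enum {: m.-tuple 'I_n}] | m <- iota 0 N.+1].

Definition r_ (n : nat) : nat := ((n * (n - 1)) %/ 2)%N.

(* [ \bigcup_{k<i} {(p^{(i,k)})} ] : lcm over all v_k-trails of v_i, k < i *)
Definition lcm_trails (p n : nat) (lab : 'I_n -> 'I_n -> nat) (i : 'I_n) : nat :=
  \big[lcmn/1%N]_(s <- seqs_upto n (r_ n) |
       is_trail n i s && (last i s < i)%N) trail_gcd p n lab i s.

(* V^{(j,b)}: connected component of v_j in the graph on {v_j,...,v_n}
   whose edges are those labeled p^c with c >= b. *)
Definition Vset (n : nat) (lab : 'I_n -> 'I_n -> nat) (j : 'I_n) (b : nat)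
    : {set 'I_n} :=
  [set v | connect (fun x y : 'I_n =>
             [&& (j <= x)%N, (j <= y)%N, x != y & (b <= lab x y)%N]) j v].

Definition Fvec (p t n : nat) (lab : 'I_n -> 'I_n -> nat) (i : 'I_n) (a : nat)
    : {ffun 'I_n -> 'Z_(p ^ t)} :=
  [ffun v => if v \in Vset n lab i a.+1 then (p ^ a)%:R else 0].

From mathcomp Require Import all_boot all_order all_algebra.
From mathcomp Require Import zify.
Import GRing.Theory.
Local Open Scope ring_scope.

(* Let a_i be the exponent of the lcm, over all trails from v_i to a smaller
   vertex, of the gcd of the trail's labels. A spline vanishing modulo p^(t-1)
   at v_1, ..., v_(i-1) takes at v_i a value in (p^(a_i)): along each such trail
   it changes by multiples of the trail's gcd. Conversely F^(i) is a spline,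
   because an edge of label > a_i leaving V^(i, a_i+1) must go to a vertex
   below v_i and would close a simple path from v_i, all of whose labels exceed
   a_i, contradicting the maximality of a_i. Subtracting multiples of the F^(i)
   vertex by vertex writes every spline as a combination of F^(1), ..., F^(n).
   Combinations with coefficients in {0, ..., p-1} stay distinct modulo p times
   the splines, so (Z/p)^n embeds into the splines modulo p, which a generating
   set of size m maps onto from (Z/p)^m. *)

Lemma dvdn_modm d k m : (d %| m)%N -> (d %| k %% m)%N = (d %| k)%N.
Proof. by move=> dm; rewrite [in RHS](divn_eq k m) dvdn_addr ?dvdn_mull. Qed.

Section IdealsZmod.
Context {m : nat}.

Lemma in_ideal0 (c : 'Z_m) : in_ideal m c 0.
Proof. by exists 0; rewrite mul0r. Qed.

Lemma in_idealD (c x y : 'Z_m) :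
  in_ideal m c x -> in_ideal m c y -> in_ideal m c (x + y).
Proof. by case=> r -> [s ->]; exists (r + s); rewrite mulrDl. Qed.

Lemma in_idealN (c x : 'Z_m) : in_ideal m c x -> in_ideal m c (- x).
Proof. by case=> r ->; exists (- r); rewrite mulNr. Qed.

Lemma in_ideal_dvd (d e : nat) (x : 'Z_m) :
  (d %| e)%N -> in_ideal m e%:R x -> in_ideal m d%:R x.
Proof. by case/dvdnP=> k -> [r ->]; exists (r * k%:R); rewrite natrM mulrA. Qed.

Hypothesis m_gt1 : (1 < m)%N.

Lemma in_idealE {d : nat} {x : 'Z_m} :
  (d %| m)%N -> in_ideal m d%:R x <-> (d %| x)%N.
Proof.
move=> dm; split=> [[r ->] | /dvdnP [q xE]].
  by rewrite -[r]natr_Zp -natrM val_Zp_nat // dvdn_modm // dvdn_mull.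
by exists q%:R; rewrite -natrM -xE natr_Zp.
Qed.

Lemma in_ideal_natE {d k : nat} :
  (d %| m)%N -> in_ideal m d%:R k%:R <-> (d %| k)%N.
Proof.
by move=> dm; rewrite -(dvdn_modm _ _ _ dm) -val_Zp_nat //; exact: in_idealE.
Qed.

Lemma in_ideal_subE {d j k : nat} :
  (d %| m)%N -> in_ideal m d%:R (j%:R - k%:R) <-> (j == k %[mod d])%N.
Proof.
move=> dm; wlog kj : j k / (k <= j)%N.
  move=> W; have [/W // | /ltnW/W [jk kj]] := leqP k j.
  by rewrite eq_sym; split=> [/in_idealN | /kj/in_idealN]; rewrite opprB.
by rewrite -natrB // eqn_mod_dvd //; exact: in_ideal_natE.
Qed.

End IdealsZmod.

Section Splines.
Variables (p t n : nat) (lab : 'I_n -> 'I_n -> nat).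
Local Notation spline := (spline p t n lab).

Lemma spline0 : spline 0.
Proof. by move=> x y _; rewrite !ffunE subrr; exact: in_ideal0. Qed.

Lemma splineD f g : spline f -> spline g -> spline (f + g).
Proof.
move=> sf sg x y xy; rewrite !ffunE opprD addrACA.
by apply: in_idealD; [exact: sf | exact: sg].
Qed.

Lemma splineN f : spline f -> spline (- f).
Proof. by move=> sf x y xy; rewrite !ffunE -opprD; apply/in_idealN/sf. Qed.

Lemma splineMn f k : spline f -> spline (f *+ k).
Proof.
move=> sf; elim: k => [|k IH]; rewrite ?mulr0n ?mulrS; first exact: spline0.
exact: splineD.
Qed.

Lemma splineMz f z : spline f -> spline (f *~ z).
Proof. by case: z => k sf; [exact: splineMn | exact/splineN/splineMn]. Qed.

Lemma spline_sum (I : Type) (r : seq I) (P : pred I) F :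
  (forall i, spline (F i)) -> spline (\sum_(i <- r | P i) F i).
Proof. by move=> sF; apply: big_ind => //; [exact: spline0 | exact: splineD]. Qed.

End Splines.

Lemma uniq_path_neq (T : eqType) (x : T) s :
  uniq (x :: s) -> path (fun a b => a != b) x s.
Proof.
elim: s x => [|y s IH] x //= /andP [/norP [xy _] ys].
by rewrite xy IH.
Qed.

Section FlowUpClasses.
Variables (p t n : nat) (lab : 'I_n -> 'I_n -> nat).
Hypothesis p_prime : prime p.
Hypothesis t_gt0 : (0 < t)%N.
Hypothesis lab_bounds : forall x y : 'I_n, x != y -> (1 <= lab x y < t)%N.

Local Notation N := (p ^ t)%N.
Local Notation spline := (spline p t n lab).
Local Notation trail_gcd := (trail_gcd p n lab).
Local Notation neq := (fun a b : 'I_n => a != b).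

Let p_gt0 : (0 < p)%N := prime_gt0 p_prime.

Let N_gt1 : (1 < N)%N.
Proof. by rewrite (leq_trans (prime_gt1 p_prime)) // -{1}(expn1 p) leq_pexp2l. Qed.

Let dvdn_pexp_N a : (a <= t)%N -> (p ^ a %| N)%N.
Proof. exact: dvdn_exp2l. Qed.

Lemma pexp_Zp_neq0 a : (a < t)%N -> ((p ^ a)%:R : 'Z_N) != 0.
Proof.
move=> a_lt; rewrite -val_eqE /= val_Zp_nat // modn_small ?ltn_exp2l ?prime_gt1 //.
by rewrite -lt0n expn_gt0 p_gt0.
Qed.

Lemma in_ideal_of_mulrn_p (x : 'Z_N) : x *+ p = 0 -> in_ideal N (p ^ t.-1)%:R x.
Proof.
move=> xp0; have : ((x * p)%:R : 'Z_N) = 0 by rewrite natrM natr_Zp mulr_natr.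
move/(congr1 (@nat_of_ord _)); rewrite val_Zp_nat //= => /eqP.
rewrite -/(dvdn _ _) -{1}(prednK t_gt0) expnSr dvdn_pmul2r // => dvd_x.
by apply/(in_idealE N_gt1); rewrite ?natr_Zp ?val_Zp_nat ?dvdn_pexp_N ?leq_pred.
Qed.

Lemma in_ideal_pexp_eq {a u v} : (a < t)%N -> (u < p)%N -> (v < p)%N ->
  in_ideal N (p ^ a.+1)%:R ((p ^ a)%:R *+ u - (p ^ a)%:R *+ v) -> u = v.
Proof.
move=> a_lt u_lt v_lt; rewrite -!mulrnA.
move/(in_ideal_subE N_gt1 (dvdn_pexp_N _ a_lt)).
by rewrite expnSr -!muln_modr eqn_pmul2l ?expn_gt0 ?p_gt0 // !modn_small // => /eqP.
Qed.

Lemma mem_trail_edges (y : 'I_n) s e : e \in trail_edges n y s ->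
  (e.1 \in map val (y :: s)) && (e.2 \in map val (y :: s)).
Proof.
elim: s y => [|z s IH] y //=; rewrite inE => /predU1P [-> /= | /IH].
  by case: (leqP y z) => yz; rewrite !inE !eqxx ?orbT.
by rewrite /= !inE => /andP [-> ->]; rewrite !orbT.
Qed.

Lemma trail_edges_uniq (x : 'I_n) s : uniq (x :: s) -> uniq (trail_edges n x s).
Proof.
elim: s x => [|y s IH] x //= /andP [xs ys]; rewrite IH // andbT.
apply/negP => /mem_trail_edges /andP [].
have xs' : (x : nat) \notin map val (y :: s) by rewrite mem_map //; exact: val_inj.
by case: (leqP x y) => xy; rewrite /= ?(minn_idPl xy) ?(maxn_idPl (ltnW xy)) (negPf xs').
Qed.

Lemma uniq_is_trail (x : 'I_n) s : uniq (x :: s) -> is_trail n x s.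
Proof. by move=> xs; rewrite /is_trail uniq_path_neq // trail_edges_uniq. Qed.

Lemma uniq_mem_seqs_upto (x : 'I_n) s : uniq (x :: s) -> s \in seqs_upto n (r_ n).
Proof.
move=> xs; have := uniq_leq_size xs (fun v _ => mem_enum 'I_n v).
rewrite size_enum_ord /= => s_lt.
have s_le : (size s <= r_ n)%N by rewrite /r_ leq_divRL //; nia.
apply/flattenP; exists [seq val tu | tu <- enum {: (size s).-tuple 'I_n}].
  by apply/mapP; exists (size s) => //; rewrite mem_iota ltnS s_le.
by apply/mapP; exists (in_tuple s) => //; rewrite mem_enum.
Qed.

Lemma trail_gcd_in_ideal (h : {ffun 'I_n -> 'Z_N}) (x : 'I_n) s :
  spline h -> path neq x s ->
  in_ideal N (trail_gcd x s)%:R (h x - h (last x s)).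
Proof.
move=> sh; elim: s x => [|y s IH] x /=.
  by rewrite subrr => _; exact: in_ideal0.
case/andP=> xy ys; rewrite -(subrKA (h y)); apply: in_idealD.
  by apply: in_ideal_dvd (sh _ _ xy); exact: dvdn_gcdl.
by apply: in_ideal_dvd (IH _ ys); exact: dvdn_gcdr.
Qed.

Lemma dvdn_trail_gcd d (x : 'I_n) s :
  path (fun a b => d %| p ^ lab a b)%N x s -> (d %| trail_gcd x s)%N.
Proof.
elim: s x => [|y s IH] x /=; first by rewrite dvdn0.
by case/andP=> dxy ys; rewrite dvdn_gcd dxy IH.
Qed.

Lemma trail_gcd_dvd (x : 'I_n) s : s != [::] -> path neq x s ->
  (trail_gcd x s %| p ^ t.-1)%N.
Proof.
case: s => [|y s] //= _ /andP [xy _]; apply: dvdn_trans (dvdn_gcdl _ _) _.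
by rewrite dvdn_exp2l //; have := lab_bounds _ _ xy; lia.
Qed.

Hypothesis lab_sym : forall x y, lab x y = lab y x.

Definition lcm_exp (i : 'I_n) := logn p (lcm_trails p n lab i).

Lemma lcm_trails_dvd (i : 'I_n) : (lcm_trails p n lab i %| p ^ t.-1)%N.
Proof.
apply: (big_ind (fun d => d %| p ^ t.-1)%N) => [|a b da db|s].
- exact: dvd1n.
- by rewrite dvdn_lcm da db.
case/andP=> /andP [si _] s_lt.
by apply: trail_gcd_dvd si; apply: contraTneq s_lt => ->; rewrite ltnn.
Qed.

Lemma lcm_trailsE (i : 'I_n) : lcm_trails p n lab i = (p ^ lcm_exp i)%N.
Proof.
rewrite /lcm_exp; case/(dvdn_pfactor _ _ p_prime): (lcm_trails_dvd i) => a _ ->.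
by rewrite pfactorK.
Qed.

Lemma lcm_exp_lt (i : 'I_n) : (lcm_exp i < t)%N.
Proof.
have := lcm_trails_dvd i; rewrite lcm_trailsE dvdn_Pexp2l ?prime_gt1 //.
by rewrite -ltnS prednK.
Qed.

Lemma dvdn_lcm_trails (i : 'I_n) s : is_trail n i s -> (last i s < i)%N ->
  s \in seqs_upto n (r_ n) -> (trail_gcd i s %| lcm_trails p n lab i)%N.
Proof.
by move=> si s_lt s_in; rewrite /lcm_trails (big_rem _ s_in) si s_lt dvdn_lcml.
Qed.

(* Along a trail to v_k the values of h differ by multiples of the trail's gcd,
   and h(v_k) lies in (p^(t-1)), which every trail gcd divides; so h(v_i) lies
   in the ideal of each gcd, i.e. of their lcm. *)
Lemma lcm_trails_in_ideal {h : {ffun 'I_n -> 'Z_N}} {i : 'I_n} : spline h ->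
  (forall k : 'I_n, (k < i)%N -> in_ideal N (p ^ t.-1)%:R (h k)) ->
  in_ideal N (p ^ lcm_exp i)%:R (h i).
Proof.
move=> sh h_lt; rewrite -lcm_trailsE.
have dvdN d : (d %| p ^ t.-1 -> d %| N)%N.
  by move/dvdn_trans; apply; rewrite dvdn_pexp_N ?leq_pred.
apply/(in_idealE N_gt1 (dvdN _ (lcm_trails_dvd i))).
apply: (big_ind (fun d => d %| h i)%N) => [|a b da db|s].
- exact: dvd1n.
- by rewrite dvdn_lcm da db.
case/andP=> /andP [si _] s_lt.
have s_nil : s != [::] by apply: contraTneq s_lt => ->; rewrite ltnn.
have gN := @trail_gcd_dvd i s s_nil si.
apply/(in_idealE N_gt1 (dvdN _ gN)); rewrite -(subrK (h (last i s)) (h i)).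
apply: in_idealD; first exact: trail_gcd_in_ideal.
exact: in_ideal_dvd gN (h_lt _ s_lt).
Qed.

Lemma simple_trail_lab_le (i : 'I_n) s b : uniq (i :: s) -> (last i s < i)%N ->
  path (fun u v => b <= lab u v)%N i s -> (b <= lcm_exp i)%N.
Proof.
move=> si s_lt s_lab.
have dvd_gcd : (p ^ b %| trail_gcd i s)%N.
  by apply: dvdn_trail_gcd; apply: sub_path s_lab => u v; exact: dvdn_exp2l.
have := dvdn_lcm_trails _ _ (uniq_is_trail _ _ si) s_lt (uniq_mem_seqs_upto _ _ si).
by move/(dvdn_trans dvd_gcd); rewrite lcm_trailsE dvdn_Pexp2l ?prime_gt1.
Qed.

Lemma Vset_ge {i : 'I_n} {b v} : v \in Vset n lab i b -> (i <= v)%N.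
Proof.
rewrite inE => /(@closed_connect _ _ [pred u : 'I_n | i <= u]%N).
by rewrite !inE leqnn => <- // x y /and4P [ix iy _ _]; rewrite !inE ix iy.
Qed.

Lemma Vset_self (i : 'I_n) b : i \in Vset n lab i b.
Proof. by rewrite inE connect0. Qed.

Lemma lab_out_Vset (i x y : 'I_n) : x \in Vset n lab i (lcm_exp i).+1 ->
  y \notin Vset n lab i (lcm_exp i).+1 -> x != y -> (lab x y <= lcm_exp i)%N.
Proof.
move=> xV yV xy; rewrite leqNgt; apply/negP => lab_gt.
have ix := Vset_ge xV.
have [iy | yi] := leqP i y.
  case/negP: yV; move: xV; rewrite !inE => /connect_trans; apply.
  by apply: connect1; rewrite /= ix iy xy lab_gt.
move: xV lab_gt xy; rewrite inE => /connectP [q /shortenP [q' iq' uq' _] ->] lab_gt xy.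
have q'_ge v : v \in i :: q' -> (i <= v)%N.
  by move=> /(path_connect iq') iv; apply: (@Vset_ge i (lcm_exp i).+1); rewrite inE.
suff : ((lcm_exp i).+1 <= lcm_exp i)%N by rewrite ltnn.
apply: (@simple_trail_lab_le i (rcons q' y)); rewrite ?last_rcons //.
  rewrite -rcons_cons rcons_uniq uq' andbT.
  by apply/negP => /q'_ge; rewrite leqNgt yi.
by rewrite rcons_path lab_gt andbT; apply: sub_path iq' => u v /and4P [].
Qed.

Definition flow_gen (i : 'I_n) := Fvec p t n lab i (lcm_exp i).

Lemma flow_gen_self (i : 'I_n) : flow_gen i i = (p ^ lcm_exp i)%:R.
Proof. by rewrite ffunE Vset_self. Qed.

Lemma flow_gen_lt (i v : 'I_n) : (v < i)%N -> flow_gen i v = 0.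
Proof. by move=> vi; rewrite ffunE; case: ifP => // /Vset_ge; rewrite leqNgt vi. Qed.

Lemma spline_flow_gen (i : 'I_n) : spline (flow_gen i).
Proof.
have pexp_in_ideal x y : x \in Vset n lab i (lcm_exp i).+1 ->
    y \notin Vset n lab i (lcm_exp i).+1 -> x != y ->
    in_ideal N (p ^ lab x y)%:R (p ^ lcm_exp i)%:R.
  move=> xV yV xy; have /andP [_ /ltnW lab_le] := lab_bounds _ _ xy.
  by apply/(in_ideal_natE N_gt1 (dvdn_pexp_N _ lab_le)); rewrite dvdn_exp2l ?lab_out_Vset.
move=> x y xy; rewrite !ffunE.
case: ifP => xV; case: ifP => yV; rewrite ?subrr ?subr0 ?sub0r; try exact: in_ideal0.
  by apply: pexp_in_ideal => //; rewrite yV.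
by rewrite lab_sym; apply/in_idealN/pexp_in_ideal; rewrite 1?eq_sym ?xV.
Qed.

Lemma flow_gen_flow_up (i : 'I_n) :
  flow_up p t n lab i (flow_gen i) /\ flow_gen i i = (p ^ lcm_exp i)%:R.
Proof.
split; last exact: flow_gen_self.
split; [exact: spline_flow_gen | | exact: flow_gen_lt].
by rewrite flow_gen_self pexp_Zp_neq0 ?lcm_exp_lt.
Qed.

Definition in_span (f : {ffun 'I_n -> 'Z_N}) :=
  exists c : 'I_n -> int, f = \sum_(j < n) flow_gen j *~ c j.

Lemma in_span_addMn f (j : 'I_n) k : in_span f -> in_span (f + flow_gen j *+ k).
Proof.
case=> c ->; exists (fun i => c i + (if i == j then k%:Z else 0)).
rewrite [RHS](eq_bigr _ (fun i _ => mulrzDr _ _ _)) big_split /=; congr (_ + _).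
by rewrite (bigD1 j) //= eqxx big1 ?addr0 // => i /negPf ->; rewrite mulr0z.
Qed.

(* Peel off the first nonzero vertex: by lcm_trails_in_ideal, f(v_k) is a
   multiple of the value p^(a_k) that flow_gen k takes at v_k. *)
Lemma spline_in_span f : spline f -> in_span f.
Proof.
suff vanish_below k : spline f -> (forall s : 'I_n, (s < k)%N -> f s = 0) -> in_span f.
  by move/(vanish_below 0); apply=> s; rewrite ltn0.
have [m lt_m] := ubnP (n - k); elim: m k lt_m f => // m IH k lt_m f sf f_lt.
have [k_lt | k_ge] := ltnP k n; last first.
  exists (fun=> 0); rewrite big1 => [|j _]; last by rewrite mulr0z.
  by apply/ffunP => v; rewrite ffunE f_lt // (leq_trans (ltn_ord v)).
pose ko := Ordinal k_lt.
have [r fr] : in_ideal N (p ^ lcm_exp ko)%:R (f ko).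
  by apply: lcm_trails_in_ideal => // s sk; rewrite f_lt //; exact: in_ideal0.
rewrite -(subrK (flow_gen ko *+ r) f); apply/in_span_addMn/(IH k.+1); first lia.
  by apply: splineD sf _; apply/splineN/splineMn/spline_flow_gen.
move=> s; rewrite ltnS leq_eqVlt => /orP [/eqP sk | sk]; rewrite !ffunE ffunMnE.
  have -> : s = ko by exact: val_inj.
  by rewrite flow_gen_self fr -[X in _ - X]mulr_natl natr_Zp subrr.
by rewrite f_lt // flow_gen_lt // mul0rn subrr.
Qed.

Definition flow_comb (e : 'I_n -> nat) := \sum_(j < n) flow_gen j *+ e j.

Lemma spline_flow_comb e : spline (flow_comb e).
Proof. by apply: spline_sum => j; apply/splineMn/spline_flow_gen. Qed.

Lemma flow_comb_sub {e1 e2} {i v : 'I_n} :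
  (forall j : 'I_n, (j < i)%N -> e1 j = e2 j) -> (v <= i)%N ->
  (flow_comb e1 - flow_comb e2) v = flow_gen i v *+ e1 i - flow_gen i v *+ e2 i.
Proof.
move=> e12 vi; rewrite [LHS]ffunE [in LHS]ffunE !sum_ffunE -sumrB (bigD1 i) //=.
rewrite !ffunMnE big1 ?addr0 // => j ji.
rewrite !ffunMnE; have [j_lt | j_ge] := ltnP j i; first by rewrite e12 ?subrr.
by rewrite flow_gen_lt ?mul0rn ?subrr // (leq_ltn_trans vi) // ltn_neqAle eq_sym ji.
Qed.

(* At the first vertex v_i where the coefficients differ, the difference of the
   combinations is p^(a_i) (e1 i - e2 i); it is also p h(v_i), where h(v_i) lies
   in (p^(a_i)) by lcm_trails_in_ideal because p h vanishes below v_i. *)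
Lemma flow_comb_inj_mod_p e1 e2 h :
  (forall j, e1 j < p)%N -> (forall j, e2 j < p)%N -> spline h ->
  flow_comb e1 - flow_comb e2 = h *+ p -> e1 =1 e2.
Proof.
move=> e1_lt e2_lt sh e12h.
suff e12 k (i : 'I_n) : (i < k)%N -> e1 i = e2 i by move=> i; exact: (e12 i.+1).
elim: k i => // k IH i; rewrite ltnS leq_eqVlt => /orP [/eqP ik | ]; last exact: IH.
have e12_lt (j : 'I_n) : (j < i)%N -> e1 j = e2 j by rewrite ik; exact: IH.
have h_lt (v : 'I_n) : (v < i)%N -> in_ideal N (p ^ t.-1)%:R (h v).
  move=> vi; apply: in_ideal_of_mulrn_p.
  rewrite -ffunMnE -e12h (flow_comb_sub e12_lt (ltnW vi)).
  by rewrite flow_gen_lt // !mul0rn subrr.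
have [r hr] := lcm_trails_in_ideal sh h_lt.
apply: (in_ideal_pexp_eq (lcm_exp_lt i) (e1_lt i) (e2_lt i)).
rewrite -flow_gen_self -(flow_comb_sub e12_lt (leqnn i)) e12h ffunMnE hr.
by exists r; rewrite -mulrnAr expnSr natrM mulr_natr.
Qed.

Lemma generates_size_ge m (g : 'I_m -> {ffun 'I_n -> 'Z_N}) :
  generates p t n lab m g -> (n <= m)%N.
Proof.
case=> sg gen.
have gen' f :
    spline f -> exists c : {ffun 'I_m -> int}, f == \sum_(j < m) g j *~ c j.
  by case/gen => c ->; exists (finfun c); apply/eqP/eq_bigr => j _; rewrite ffunE.
have Fp_lt (x : 'F_p) : (x < p)%N by case: x => x; rewrite /= Fp_cast.
pose coef (e : {ffun 'I_n -> 'F_p}) :=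
  xchoose (gen' _ (spline_flow_comb (fun j => e j))).
have coefP (e : {ffun 'I_n -> 'F_p}) :
    flow_comb (fun j => e j) = \sum_(j < m) g j *~ coef e j.
  exact/eqP/(xchooseP (gen' _ (spline_flow_comb _))).
pose phi e := [ffun j => (coef e j)%:~R : 'F_p].
suff phi_inj : injective phi.
  have := leq_card phi phi_inj.
  by rewrite !card_ffun !card_ord Fp_cast // leq_exp2l ?prime_gt1.
move=> e1 e2 /ffunP phi12; apply/ffunP => i; apply: val_inj.
have p_dvd j : (p %| coef e1 j - coef e2 j)%Z.
  rewrite (dvdz_pcharf (pchar_Fp p_prime)) rmorphB subr_eq0.
  by have := phi12 j; rewrite !ffunE => /eqP.
pose h := \sum_(j < m) g j *~ ((coef e1 j - coef e2 j) %/ p)%Z.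
apply: (flow_comb_inj_mod_p _ _ h (fun j => Fp_lt (e1 j)) (fun j => Fp_lt (e2 j))).
  by apply: spline_sum => j; apply/splineMz.
rewrite !coefP -sumrB -sumrMnl; apply: eq_bigr => j _.
by rewrite -mulrzBr -{1}(divzK (p_dvd j)) mulrzA.
Qed.

Lemma spline_rank_n : spline_rank p t n lab n.
Proof.
split; last exact: generates_size_ge.
by exists flow_gen; split=> [|f /spline_in_span]; [exact: spline_flow_gen | ].
Qed.

End FlowUpClasses.

Theorem mainTheorem9 (p t n : nat) (lab : 'I_n -> 'I_n -> nat) :
  prime p -> (1 <= t)%N ->
  (forall x y : 'I_n, lab x y = lab y x) ->
  (forall x y : 'I_n, x != y -> (1 <= lab x y < t)%N) ->
  (forall i : 'I_n, (0 < i)%N ->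
     exists a : nat,
       (p ^ a)%N = lcm_trails p n lab i /\
       flow_up p t n lab i (Fvec p t n lab i a) /\
       Fvec p t n lab i a i = (p ^ a)%:R) /\
  spline_rank p t n lab n.
Proof.
move=> p_prime t_gt0 lab_sym lab_bounds; split; last exact: spline_rank_n.
move=> i _; exists (lcm_exp p n lab i); split; last exact: flow_gen_flow_up.
by rewrite (lcm_trailsE _ _ _ _ p_prime t_gt0 lab_bounds).
Qed.
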